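(* Let $(M,g)$ be a connected compact Riemannian manifold, and let $d$ be a metric on $M$ (not necessarily induced by $g$). Let $X$ be a random variable with values in $M$ and let $f:M\to[0,\infty)$ be continuous with respect to $d$. Define $M_\delta := \{y\in M : f(y)>\delta\}$ for $\delta>0$ and $M_0 := \{y\in M: f(y)=0\}$. Suppose $M_0\neq\emptyset$ and that for every $\delta>0$ there exists $t_\delta>0$ such that for all $\tilde y\in M_0$, all $y\in M_\delta$ and all $t\ge t_\delta$, $$\mathbb{E}[-\ln p(X,y,t)] - \mathbb{E}[-\ln p(X,\tilde y,t)] > 0.$$ Then $E_\infty^{lower}(X)$ and $E_\infty^{upper}(X)$ are contained in $M_0$.
   Context: Heat kernel: $p(x,y,t)$ is the minimal heat kernel of $M$, the minimal solution of $\frac{\partial}{\partial t} p(x,y,t) = \frac12 \Delta_{g,x} p(x,y,t)$ with $\int_M p(x,y,t)\,dy = 1$, where $\Delta_g$ is the Laplace–Beltrami operator. For $t>0$, the diffusion $t$-mean set is $E_t(X) = \operatorname{argmin}_{y\in M} \mathbb{E}[-\ln p(X,y,t)]$. Kuratowski limits in $(M,d)$: for sets $A_k\subseteq M$, $\mathrm{Li}_{k\to\infty} A_k$ is the set of points $x$ for which there exist $x_k\in A_k$ with $x_k\to x$; $\mathrm{Ls}_{k\to\infty}A_k$ is the set of points $x$ for which there exist strictly increasing indices $(k_j)$ and $x_{k_j}\in A_{k_j}$ with $x_{k_j}\to x$. Then $E_\infty^{lower}(X) := \bigcap \mathrm{Li}_{k\to\infty} E_{t_k}(X)$ and $E_\infty^{upper}(X)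 := \bigcap \mathrm{Ls}_{k\to\infty} E_{t_k}(X)$, the intersections over all monotone increasing sequences $0<t_k\to\infty$, with convergence in $d$. *)

From HB Require Import structures.
From mathcomp Require Import all_boot all_order all_algebra.
From mathcomp Require Import all_classical all_reals all_analysis.
Set Implicit Arguments. Unset Strict Implicit. Unset Printing Implicit Defensive.
Import Order.TTheory GRing.Theory Num.Theory.
Import numFieldNormedType.Exports.
Local Open Scope classical_set_scope.
Local Open Scope ring_scope.

Definition is_metric (R : realType) (M : Type) (dist : M -> M -> R) : Prop :=
  (forall x y, 0 <= dist x y) /\ (forall x y, dist x y = 0 <-> x = y) /\
  (forall x y, dist x y = dist y x) /\
  (forall x y z, dist x z <= dist x y + dist y z).

Definition dcvg (R : realType) (M : Type) (dist : M -> M -> R)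
  (u : nat -> M) (x : M) : Prop :=
  forall e : R, 0 < e -> exists N : nat, forall k : nat, (N <= k)%N -> dist (u k) x < e.

Definition dcontinuous (R : realType) (M : Type) (dist : M -> M -> R)
  (f : M -> R) : Prop :=
  forall x (e : R), 0 < e -> exists del : R, 0 < del /\
    forall y, dist x y < del -> `|f y - f x| < e.

Definition kLi (R : realType) (M : Type) (dist : M -> M -> R)
  (A : nat -> set M) : set M :=
  [set x | exists u : nat -> M, (forall k, A k (u k)) /\ dcvg dist u x].

Definition kLs (R : realType) (M : Type) (dist : M -> M -> R)
  (A : nat -> set M) : set M :=
  [set x | exists (kj : nat -> nat) (u : nat -> M),
     (forall j, (kj j < kj j.+1)%N) /\ (forall j, A (kj j) (u j)) /\ dcvg dist u x].

Definition time_seq (R : realType) (t : nat -> R) : Prop :=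
  (forall k, 0 < t k) /\ (forall k, t k <= t k.+1) /\
  (forall b : R, exists N : nat, forall k, (N <= k)%N -> b < t k).

Definition heat_loss (R : realType) (dO : measure_display) (Omega : measurableType dO)
  (M : Type) (P : probability Omega R) (X : Omega -> M) (p : M -> M -> R -> R)
  (y : M) (t : R) : \bar R :=
  (\int[P]_w (- ln (p (X w) y t))%:E)%E.

Definition diffusion_mean (R : realType) (dO : measure_display) (Omega : measurableType dO)
  (M : Type) (P : probability Omega R) (X : Omega -> M) (p : M -> M -> R -> R)
  (t : R) : set M :=
  [set y | forall z, (heat_loss P X p y t <= heat_loss P X p z t)%E].

Definition E_inf_lower (R : realType) (dO : measure_display) (Omega : measurableType dO)
  (M : Type) (dist : M -> M -> R) (P : probability Omega R) (X : Omega -> M)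
  (p : M -> M -> R -> R) : set M :=
  [set x | forall t : nat -> R, time_seq t ->
     kLi dist (fun k => diffusion_mean P X p (t k)) x].

Definition E_inf_upper (R : realType) (dO : measure_display) (Omega : measurableType dO)
  (M : Type) (dist : M -> M -> R) (P : probability Omega R) (X : Omega -> M)
  (p : M -> M -> R -> R) : set M :=
  [set x | forall t : nat -> R, time_seq t ->
     kLs dist (fun k => diffusion_mean P X p (t k)) x].

From HB Require Import structures.
From mathcomp Require Import all_boot all_order all_algebra.
From mathcomp Require Import all_classical all_reals all_analysis.
From mathcomp Require Import lra.
Set Implicit Arguments. Unset Strict Implicit. Unset Printing Implicit Defensive.
Import Order.TTheory GRing.Theory Num.Theory.
Local Open Scope classical_set_scope.
Local Open Scope ring_scope.

(* If f x > 0, put del := f x / 2. For t >= t_del every diffusion t-mean y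
   has f y <= del (a point of M_0 would have strictly smaller loss), while by
   continuity f > del on a d-ball around x. Along the times t_del + k no mean
   set meets that ball, so x lies in no Kuratowski upper limit; and lower
   limits are contained in upper limits. *)

Section KuratowskiLimits.
Variables (R : realType) (M : Type) (dist : M -> M -> R).

Lemma kLi_sub_kLs (A : nat -> set M) : kLi dist A `<=` kLs dist A.
Proof. by move=> x [u [Au cvgu]]; exists id, u. Qed.

Lemma kLsN_ball (A : nat -> set M) (x : M) (r : R) : 0 < r ->
  (forall k y, A k y -> r <= dist y x) -> ~ kLs dist A x.
Proof.
move=> r_gt0 Afar [kj [u [_ [Au cvgu]]]].
have [N /(_ N (leqnn N))] := cvgu r r_gt0.
by rewrite ltNge (Afar _ _ (Au N)).
Qed.

End KuratowskiLimits.

Lemma time_seq_shift (R : realType) (a : R) : 0 < a -> time_seq (fun k => a + k%:R).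
Proof.
move=> a_gt0; split; first by move=> k; exact: ltr_pwDl.
split; first by move=> k; rewrite lerD2l ler_nat.
move=> b; exists (Num.truncn (b - a)).+1 => k le_k.
have le_truncn_k : ((Num.truncn (b - a)).+1%:R <= k%:R :> R) by rewrite ler_nat.
by rewrite -ltrBlDl (lt_le_trans (truncnS_gt _) le_truncn_k).
Qed.

Lemma dcontinuous_ball_gt (R : realType) (M : Type) (dist : M -> M -> R)
    (f : M -> R) (x : M) (c : R) :
  (forall y z, dist y z = dist z y) -> dcontinuous dist f -> c < f x ->
  exists2 r, 0 < r & forall y, dist y x < r -> c < f y.
Proof.
move=> dsym fcont lt_c_fx.
have c_lt_fx : 0 < f x - c by rewrite subr_gt0.
have [r [r_gt0 near_fx]] := fcont x (f x - c) c_lt_fx.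
exists r => // y; rewrite dsym => /near_fx.
by rewrite ltr_norml => /andP[+ _]; lra.
Qed.

Section DiffusionMeans.
Variables (R : realType) (dO : measure_display) (Omega : measurableType dO).
Variables (M : Type) (P : probability Omega R) (X : Omega -> M).
Variable (p : M -> M -> R -> R).

Lemma diffusion_meanN (y z : M) (t : R) :
  (heat_loss P X p z t < heat_loss P X p y t)%E -> ~ diffusion_mean P X p t y.
Proof. by move=> lt_zy /(_ z); rewrite leNgt lt_zy. Qed.

Lemma diffusion_mean_sub_le (f : M -> R) (del td : R) (y0 : M) :
  f y0 = 0 ->
  (forall (yt y : M) (t : R), f yt = 0 -> del < f y -> td <= t ->
     (0 < heat_loss P X p y t - heat_loss P X p yt t)%E) ->
  forall t, td <= t -> diffusion_mean P X p t `<=` [set y | f y <= del].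
Proof.
move=> fy0 gap t le_td_t y mean_y /=; rewrite leNgt; apply/negP => lt_del_fy.
apply: (diffusion_meanN (z := y0) _ mean_y).
by rewrite -sube_gt0; exact: gap.
Qed.

Lemma E_inf_lower_sub_upper (dist : M -> M -> R) :
  E_inf_lower dist P X p `<=` E_inf_upper dist P X p.
Proof. by move=> x Lx t ts; apply: kLi_sub_kLs; exact: Lx. Qed.

End DiffusionMeans.

Theorem lemma2p7 (R : realType) (dO : measure_display) (Omega : measurableType dO)
  (dM : measure_display) (M : measurableType dM)
  (P : probability Omega R) (X : Omega -> M) (mX : measurable_fun setT X)
  (p : M -> M -> R -> R)
  (dist : M -> M -> R) (hdist : is_metric dist)
  (f : M -> R) (f_ge0 : forall y, 0 <= f y) (f_cont : dcontinuous dist f)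
  (M0_ne : exists y, f y = 0)
  (H : forall del : R, 0 < del -> exists td : R, 0 < td /\
     forall (yt y : M) (t : R), f yt = 0 -> del < f y -> td <= t ->
       (0 < heat_loss P X p y t - heat_loss P X p yt t)%E) :
  E_inf_lower dist P X p `<=` [set y | f y = 0] /\
  E_inf_upper dist P X p `<=` [set y | f y = 0].
Proof.
have [_ [_ [dsym _]]] := hdist.
have [y0 fy0] := M0_ne.
suff upper_sub : E_inf_upper dist P X p `<=` [set y | f y = 0].
  by split=> //; apply: subset_trans upper_sub; exact: E_inf_lower_sub_upper.
move=> x Ux /=; apply/eqP; rewrite eq_le f_ge0 andbT leNgt; apply/negP => fx_gt0.
have del_gt0 : 0 < f x / 2 by rewrite divr_gt0.
have [td [td_gt0 gap]] := H _ del_gt0.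
have del_lt_fx : f x / 2 < f x by lra.
have [r r_gt0 ball_gt] := dcontinuous_ball_gt dsym f_cont del_lt_fx.
apply: (kLsN_ball r_gt0 _ (Ux _ (time_seq_shift td_gt0))) => k y mean_y.
have fy_le : f y <= f x / 2.
  by apply: (diffusion_mean_sub_le fy0 gap _ mean_y); rewrite lerDl.
by rewrite leNgt; apply/negP => /ball_gt; rewrite ltNge fy_le.
Qed.
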